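(* For every integer $n\ge 0$, $$\Phi^{(3)}[a, a'; bq^n, b'; c; x, y] = \sum_{k=0}^n \begin{bmatrix} n \\ k \end{bmatrix} q^{2\binom{k}{2}} \frac{(bx)^k (a; q)_k}{(c; q)_k} \Phi^{(3)}[aq^k, a'; bq^k, b'; cq^k; x, y]$$ and $$\Phi^{(3)}[a, a'; bq^{-n}, b'; c; x, y] = \sum_{k=0}^n \begin{bmatrix} n \\ k \end{bmatrix} q^{\binom{k}{2} - nk} \frac{(-bx)^k (a; q)_k}{(c; q)_k} \Phi^{(3)}[aq^k, a'; b, b'; cq^k; x, y].$$
   Context: Let $q$ be a complex number with $0<|q|<1$. For complex $z$ and integer $m\ge 0$, $(z;q)_m=\prod_{j=0}^{m-1}(1-zq^j)$, with $(z;q)_0=1$. For integers $0\le k\le n$, $\begin{bmatrix} n \\ k \end{bmatrix}=\frac{(q;q)_n}{(q;q)_k(q;q)_{n-k}}$ is the $q$-binomial coefficient. The $q$-Appell function $\Phi^{(3)}$ is $$\Phi^{(3)}[a, a'; b, b'; c; x, y] = \sum_{m, n \geq 0} \frac{(a; q)_m (a'; q)_n (b; q)_m (b'; q)_n}{(q; q)_m (q; q)_n (c; q)_{m+n}} x^m y^n.$$ Identities are understood as identities of power series in $x,y$ (formal, or convergent for small $|x|,|y|$), with complex parameters chosen so that no denominator occurring vanishes. *)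

From HB Require Import structures.
From mathcomp Require Import all_boot all_order all_algebra.
From mathcomp Require Import complex.
From mathcomp Require Import reals.
Set Implicit Arguments. Unset Strict Implicit. Unset Printing Implicit Defensive.
Import Order.TTheory GRing.Theory Num.Theory.
Local Open Scope ring_scope.

Section Defs.
Variable (K : fieldType).

Definition qpoch (z q : K) (m : nat) : K := \prod_(j < m) (1 - z * q ^+ j).

Definition qbinom (q : K) (n k : nat) : K :=
  qpoch q q n / (qpoch q q k * qpoch q q (n - k)).

(* formal power series in two variables x, y : coefficient of x^m y^n *)
Definition fps2 := nat -> nat -> K.

Definition fps2_mul (F G : fps2) : fps2 := fun m n =>
  \sum_(i < m.+1) \sum_(j < n.+1) F i j * G (m - i)%N (n - j)%N.

Definition fps2_xmon (c : K) (k : nat) : fps2 := fun m n =>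
  if (m == k) && (n == 0%N) then c else 0.

Definition Phi3 (q a a' b b' c : K) : fps2 := fun m n =>
  (qpoch a q m * qpoch a' q n * qpoch b q m * qpoch b' q n)
  / (qpoch q q m * qpoch q q n * qpoch c q (m + n)).
End Defs.

From HB Require Import structures.
From mathcomp Require Import all_boot all_order all_algebra.
From mathcomp Require Import complex.
From mathcomp Require Import reals.
From mathcomp Require Import ring.
From Stdlib Require Import FunctionalExtensionality.
Set Implicit Arguments. Unset Strict Implicit. Unset Printing Implicit Defensive.
Import Order.TTheory GRing.Theory Num.Theory.
Local Open Scope ring_scope.

(* Compare coefficients of x^m y^l. Since (a;q)_m = (a;q)_k (aq^k;q)_(m-k) and
   (c;q)_(m+l) = (c;q)_k (cq^k;q)_(m-k+l), the coefficient of x^m y^l in the k-th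
   summand on the right is that of Phi3 with (b;q)_m replaced by the k-th term of a
   finite expansion of (b;q)_m. Both identities thus reduce to
     (bq^n;q)_m = sum_k [n k] q^(2 C(k,2)) b^k (q^(m-k+1);q)_k (bq^k;q)_(m-k),
     (B;q)_m    = sum_k [n k] q^(C(k,2)) (-B)^k (q^(m-k+1);q)_k (Bq^n;q)_(m-k),
   the second one taken at B = bq^(-n). Both follow by induction on n from
   (zq;q)_j = (z;q)_j + z(1-q^j)(zq;q)_(j-1), combined with the two q-Pascal rules. *)

Section QPochhammer.
Variables (K : fieldType) (q : K).

Lemma qpoch0 z : qpoch z q 0 = 1.
Proof. by rewrite /qpoch big_ord0. Qed.

Lemma qpochS z m : qpoch z q m.+1 = qpoch z q m * (1 - z * q ^+ m).
Proof. by rewrite /qpoch big_ord_recr. Qed.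

Lemma qpochSl z m : qpoch z q m.+1 = (1 - z) * qpoch (z * q) q m.
Proof.
rewrite /qpoch big_ord_recl expr0 mulr1; congr (_ * _).
by apply: eq_bigr => i _; rewrite exprS mulrA.
Qed.

Lemma qpochD z k j : qpoch z q (k + j) = qpoch z q k * qpoch (z * q ^+ k) q j.
Proof.
rewrite /qpoch big_split_ord; congr (_ * _).
by apply: eq_bigr => i _; rewrite exprD mulrA.
Qed.

Lemma qpoch_split z k m : (k <= m)%N ->
  qpoch z q m = qpoch z q k * qpoch (z * q ^+ k) q (m - k).
Proof. by move=> lekm; rewrite -qpochD subnKC. Qed.

Lemma qpoch_mulq z j :
  qpoch (z * q) q j = qpoch z q j + z * (1 - q ^+ j) * qpoch (z * q) q j.-1.
Proof.
case: j => [|j]; first by rewrite !qpoch0 subrr mulr0 mul0r addr0.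
by rewrite (qpochSl z) (qpochS (z * q)) /= exprS; ring.
Qed.

(* Gaussian binomials through the q-Pascal rule: division-free and 0 for k > n,
   whereas [qbinom] is a quotient that agrees with [qbin] only for k <= n. *)
Fixpoint qbin (n k : nat) : K :=
  match n, k with
  | _, 0 => 1
  | 0, _.+1 => 0
  | n'.+1, k'.+1 => qbin n' k' + q ^+ k'.+1 * qbin n' k'.+1
  end.

Lemma qbin0 n : qbin n 0 = 1.
Proof. by case: n. Qed.

Lemma qbinS n k : qbin n.+1 k.+1 = qbin n k + q ^+ k.+1 * qbin n k.+1.
Proof. by []. Qed.

Lemma qbin_small n k : (n < k)%N -> qbin n k = 0.
Proof.
elim: n k => [|n IHn] [|k] //= ltnk.
by rewrite !IHn ?mulr0 ?addr0 // ltnW.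
Qed.

Lemma qbin_ratio n k : qbin n k.+1 * (1 - q ^+ k.+1) = qbin n k * (1 - q ^+ (n - k)).
Proof.
elim: n k => [|n IHn] k.
  by case: k => [|k]; rewrite /= ?sub0n ?subrr ?mulr0 ?mul0r.
case: k => [|k].
  rewrite qbinS !qbin0 subn0 mulrDl mul1r -mulrA IHn qbin0 subn0 !exprS; ring.
rewrite qbinS [qbin n.+1 k.+1]qbinS subSS !mulrDl.
rewrite -[_ * qbin n k.+2 * _]mulrA -[_ * qbin n k.+1 * _]mulrA (IHn k.+1) -(IHn k).
have collect (e f : K) : qbin n k.+1 * (1 - e) + e * (qbin n k.+1 * (1 - f)) =
    qbin n k.+1 * (1 - e * f) by ring.
rewrite !collect; case: (ltnP k n) => [ltkn | lenk].
  by rewrite -!exprD -(subnSK ltkn) addSn addnS.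
by rewrite qbin_small ?ltnS // !mul0r.
Qed.

Lemma qbinS_rev n k : qbin n.+1 k.+1 = qbin n k.+1 + q ^+ (n - k) * qbin n k.
Proof.
apply: subr0_eq; transitivity (qbin n k * (1 - q ^+ (n - k)) - qbin n k.+1 * (1 - q ^+ k.+1)).
  by rewrite qbinS; ring.
by rewrite qbin_ratio subrr.
Qed.

Lemma qbin_qpoch n k : (k <= n)%N ->
  qbin n k * qpoch q q k * qpoch q q (n - k) = qpoch q q n.
Proof.
elim: k => [|k IHk] ltkn; first by rewrite qbin0 qpoch0 subn0 !mul1r.
rewrite -{}IHk; last exact: ltnW.
rewrite -(subnSK ltkn) !qpochS -[q * q ^+ k]exprS -[q * _]exprS subnSK //.
transitivity (qbin n k.+1 * (1 - q ^+ k.+1) * qpoch q q k * qpoch q q (n - k.+1)); first ring.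
by rewrite qbin_ratio; ring.
Qed.

Lemma qbinom_qbin n k : (forall j, qpoch q q j != 0) -> (k <= n)%N ->
  qbinom q n k = qbin n k.
Proof.
by move=> qq_neq0 lekn; rewrite /qbinom -(qbin_qpoch lekn); field; rewrite !qq_neq0.
Qed.

Lemma sum_qbinS n (T : nat -> K) :
  \sum_(k < n.+2) qbin n.+1 k * T k = \sum_(k < n.+1) qbin n k * (q ^+ k * T k + T k.+1).
Proof.
rewrite big_ord_recl qbin0.
under eq_bigr => i _ do rewrite lift0 qbinS mulrDl.
rewrite big_split /=.
under [in RHS]eq_bigr => i _ do rewrite mulrDr.
rewrite big_split /= addrCA [RHS]addrC; congr (_ + _).
rewrite big_ord_recr /= qbin_small // mulr0 mul0r addr0 big_ord_recl qbin0 expr0 !mul1r.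
congr (_ + _); apply: eq_bigr => i _.
by rewrite lift0 mulrCA mulrA.
Qed.

Lemma sum_qbinS_rev n (T : nat -> K) :
  \sum_(k < n.+2) qbin n.+1 k * T k =
  \sum_(k < n.+1) qbin n k * (T k + q ^+ (n - k) * T k.+1).
Proof.
rewrite big_ord_recl qbin0.
under eq_bigr => i _ do rewrite lift0 qbinS_rev mulrDl.
rewrite big_split /=.
under [in RHS]eq_bigr => i _ do rewrite mulrDr.
rewrite big_split /= addrA; congr (_ + _).
  rewrite big_ord_recr /= qbin_small // mul0r addr0 big_ord_recl qbin0.
  by congr (_ + _); apply: eq_bigr => i _; rewrite lift0.
by apply: eq_bigr => i _; rewrite mulrCA mulrA.
Qed.

(* qfall m k = (q^(m-k+1);q)_k. For k > m the factor j = m is 1 - q^0 = 0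
   (truncated subtraction), so qfall m k = 0. *)
Definition qfall (m k : nat) : K := \prod_(j < k) (1 - q ^+ (m - j)).

Lemma qfall0 m : qfall m 0 = 1.
Proof. by rewrite /qfall big_ord0. Qed.

Lemma qfallS m k : qfall m k.+1 = qfall m k * (1 - q ^+ (m - k)).
Proof. by rewrite /qfall big_ord_recr. Qed.

Lemma qfall_small m k : (m < k)%N -> qfall m k = 0.
Proof.
by move=> ltmk; rewrite /qfall (bigD1 (Ordinal ltmk)) //= subnn expr0 subrr mul0r.
Qed.

Lemma qpoch_qfall m k : (k <= m)%N -> qpoch q q m = qpoch q q (m - k) * qfall m k.
Proof.
elim: k => [|k IHk] ltkm; first by rewrite subn0 qfall0 mulr1.
rewrite IHk; last exact: ltnW.
by rewrite -(subnSK ltkm) qpochS qfallS -exprS subnSK // mulrAC mulrA.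
Qed.

Lemma qpoch_shift_up n b m :
  qpoch (b * q ^+ n) q m = \sum_(k < n.+1)
    qbin n k * q ^+ (2 * 'C(k, 2)) * b ^+ k * qfall m k * qpoch (b * q ^+ k) q (m - k).
Proof.
elim: n b => [|n IHn] b.
  by rewrite big_ord1 qbin0 qfall0 !expr0 subn0 !mulr1 !mul1r.
pose T k := q ^+ (2 * 'C(k, 2)) * b ^+ k * qfall m k * qpoch (b * q ^+ k) q (m - k).
rewrite [q ^+ n.+1]exprS mulrA IHn.
transitivity (\sum_(k < n.+1) qbin n k * (q ^+ k * T k + T k.+1)); last first.
  by rewrite -sum_qbinS; apply: eq_bigr => k _; rewrite /T !mulrA.
have binS2 j : q ^+ (2 * 'C(j.+1, 2)) = q ^+ (2 * 'C(j, 2)) * q ^+ j ^+ 2.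
  by rewrite binS bin1 mulnDr exprD [(2 * j)%N]mulnC [q ^+ (j * 2)]exprM.
apply: eq_bigr => k _.
rewrite /T (mulrAC b) qpoch_mulq -subnS -[b * q ^+ k * q]mulrA -exprSr.
by rewrite qfallS binS2 [b ^+ k.+1]exprS [(b * q) ^+ k]exprMn; ring.
Qed.

Lemma qpoch_shift_down n B m :
  qpoch B q m = \sum_(k < n.+1)
    qbin n k * q ^+ 'C(k, 2) * (- B) ^+ k * qfall m k * qpoch (B * q ^+ n) q (m - k).
Proof.
elim: n => [|n IHn]; first by rewrite big_ord1 qbin0 qfall0 !expr0 subn0 !mulr1 !mul1r.
pose T k := q ^+ 'C(k, 2) * (- B) ^+ k * qfall m k * qpoch (B * q ^+ n.+1) q (m - k).
rewrite IHn.
transitivity (\sum_(k < n.+1) qbin n k * (T k + q ^+ (n - k) * T k.+1)); last first.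
  by rewrite -sum_qbinS_rev; apply: eq_bigr => k _; rewrite /T !mulrA.
apply: eq_bigr => k _.
have qn : q ^+ n = q ^+ (n - k) * q ^+ k by rewrite -exprD subnK // -ltnS.
rewrite /T [q ^+ n.+1]exprSr [B * (q ^+ n * q)]mulrA qpoch_mulq -subnS.
(* Hiding the symbols lets [qn] rewrite only the free factor q^n. *)
set P := qpoch (B * q ^+ n) q (m - k); set X := qpoch (B * q ^+ n * q) q (m - k.+1).
by rewrite qn binS bin1 exprD [(- B) ^+ k.+1]exprS qfallS; ring.
Qed.

Lemma exprz_shift_coef b n k : q != 0 ->
  q ^+ 'C(k, 2) * (- (b * q ^- n)) ^+ k = q ^ ('C(k, 2)%:Z - (n * k)%:Z) * (- b) ^+ k.
Proof.
move=> q_neq0; rewrite expfzDr // -exprnN -mulNr exprMn exprVn -exprM.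
by rewrite mulrA mulrAC.
Qed.
End QPochhammer.

Section Phi3Expansion.
Variable K : fieldType.

Lemma fps2_mul_xmon (c : K) k (G : fps2 K) m l :
  fps2_mul (fps2_xmon c k) G m l = if (k <= m)%N then c * G (m - k)%N l else 0.
Proof.
have row (i : 'I_m.+1) : \sum_(j < l.+1)
    (if (i == k :> nat) && (j == 0%N :> nat) then c else 0) * G (m - i)%N (l - j)%N =
    if i == k :> nat then c * G (m - i)%N l else 0.
  rewrite big_ord_recl big1 => [|j _]; last by rewrite andbF mul0r.
  by rewrite andbT subn0 addr0; case: eqP; rewrite ?mul0r.
rewrite /fps2_mul /fps2_xmon (eq_bigr _ (fun i _ => row i)) -big_mkcond /=.
by rewrite (big_ord1_eq _ (fun j => c * G (m - j)%N l)) ltnS.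
Qed.

Lemma Phi3_expand (d bk : nat -> K) (q a a' b b' c : K) n m l :
  (forall j, qpoch q q j != 0) -> (forall j, qpoch c q j != 0) ->
  (forall j, qpoch b q j = \sum_(k < n.+1) d k * qfall q j k * qpoch (bk k) q (j - k)) ->
  Phi3 q a a' b b' c m l = \sum_(k < n.+1) fps2_mul
    (fps2_xmon (d k * qpoch a q k / qpoch c q k) k)
    (Phi3 q (a * q ^+ k) a' (bk k) b' (c * q ^+ k)) m l.
Proof.
move=> qq_neq0 c_neq0 b_expand.
have cq_neq0 k j : qpoch (c * q ^+ k) q j != 0.
  by have := c_neq0 (k + j)%N; rewrite qpochD mulf_eq0 negb_or => /andP[].
pose C := qpoch a q m * qpoch a' q l * qpoch b' q l /
  (qpoch q q m * qpoch q q l * qpoch c q (m + l)).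
transitivity (\sum_(k < n.+1) C * (d k * qfall q m k * qpoch (bk k) q (m - k))).
  by rewrite -mulr_sumr -b_expand /Phi3 /C; ring.
apply: eq_bigr => k _; rewrite fps2_mul_xmon; case: leqP => [lekm | ltmk]; last first.
  by rewrite qfall_small // mulr0 mul0r mulr0.
have qfall_neq0 : qfall q m k != 0.
  by have := qq_neq0 m; rewrite (qpoch_qfall q lekm) mulf_eq0 negb_or => /andP[].
have lekml : (k <= m + l)%N by rewrite (leq_trans lekm) ?leq_addr.
rewrite /Phi3 /C (qpoch_split q a lekm) (qpoch_split q c lekml) -addnBAC //.
by rewrite (qpoch_qfall q lekm); field; rewrite ?qq_neq0 ?cq_neq0 ?c_neq0 ?qfall_neq0.
Qed.

End Phi3Expansion.

Lemma qpoch_q_neq0 (K : numFieldType) (q : K) j : `|q| < 1 -> qpoch q q j != 0.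
Proof.
move=> q_lt1; apply/prodf_neq0 => i _; rewrite subr_eq0; apply/eqP => q1.
have : `|q * q ^+ i| < 1 by rewrite -exprS normrX exprn_ilt1.
by rewrite -q1 normr1 ltxx.
Qed.

Theorem theorem12 (R : realType) (q a a' b b' c : R[i]) (n : nat) :
  0 < `|q| -> `|q| < 1 ->
  (forall j : nat, qpoch c q j != 0) ->
  (Phi3 q a a' (b * q ^+ n) b' c =
     (fun m l => \sum_(k < n.+1)
        fps2_mul
          (fps2_xmon (qbinom q n k * q ^+ (2 * 'C(k, 2))
                        * b ^+ k * qpoch a q k / qpoch c q k) k)
          (Phi3 q (a * q ^+ k) a' (b * q ^+ k) b' (c * q ^+ k)) m l))
  /\
  (Phi3 q a a' (b * q ^- n) b' c =
     (fun m l => \sum_(k < n.+1)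
        fps2_mul
          (fps2_xmon (qbinom q n k * q ^ ('C(k, 2)%:Z - (n * k)%:Z)
                        * (- b) ^+ k * qpoch a q k / qpoch c q k) k)
          (Phi3 q (a * q ^+ k) a' b b' (c * q ^+ k)) m l)).
Proof.
move=> q_gt0 q_lt1 c_neq0.
have qq_neq0 j : qpoch q q j != 0 := qpoch_q_neq0 j q_lt1.
have q_neq0 : q != 0 by rewrite -normr_gt0.
split; apply: functional_extensionality => m; apply: functional_extensionality => l /=.
  apply: (@Phi3_expand _ (fun k => qbinom q n k * q ^+ (2 * 'C(k, 2)) * b ^+ k)
                      (fun k => b * q ^+ k)) => // j.
  rewrite qpoch_shift_up; apply: eq_bigr => k _.
  by rewrite (qbinom_qbin qq_neq0 (ltn_ord k : (k <= n)%N)).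
apply: (@Phi3_expand _ (fun k => qbinom q n k * q ^ ('C(k, 2)%:Z - (n * k)%:Z) * (- b) ^+ k)
                    (fun=> b)) => // j.
rewrite (qpoch_shift_down q n) divfK ?expf_neq0 //; apply: eq_bigr => k _.
rewrite (qbinom_qbin qq_neq0 (ltn_ord k : (k <= n)%N)).
by rewrite -[qbin q n k * _ * _]mulrA exprz_shift_coef // mulrA.
Qed.
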